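(* Let $0<\kappa<1$. For $\phi$ near $0$ define $$u(\phi)=\int_0^{\phi} F\!\left(\tfrac14,\tfrac34;\tfrac12;\kappa^2\sin^2\theta\right)\,\mathrm{d}\theta ,$$ let $u\mapsto\phi(u)$ be the local inverse near $0$ with $\phi(0)=0$, let $\psi=\psi(u)$ be defined near $u=0$ with $\psi(0)=0$ and $\sin\psi=\kappa\sin\phi$, and set $d=\cos\psi$. Then $d$ extends to an elliptic function, given by $$d=1-\frac{\tfrac12\kappa^2}{\wp+\tfrac13},$$ where $\wp=\wp(\,\cdot\,;g_2,g_3)$ is the Weierstrass elliptic function with invariants $g_2=\tfrac43-\kappa^2$ and $g_3=\tfrac{8}{27}-\tfrac13\kappa^2$.
   Context: $F(a,b;c;z)$ denotes the Gauss hypergeometric function ${}_2F_1(a,b;c;z)$. $\wp(\cdot;g_2,g_3)$ is the Weierstrass function satisfying $(\wp')^2=4\wp^3-g_2\wp-g_3$ with a double pole at $0$. *)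

From Stdlib Require Import Reals Arith Factorial.
From Coquelicot Require Import Coquelicot.
Open Scope R_scope.

Fixpoint poch (a : R) (n : nat) : R :=
  match n with
  | O => 1
  | S m => poch a m * (a + INR m)
  end.

(* Gauss hypergeometric function 2F1(a,b;c;z) as its power series
   (used here only for 0 <= z < 1, where it converges). *)
Definition hyp2F1 (a b c z : R) : R :=
  Series (fun n => poch a n * poch b n / (poch c n * INR (fact n)) * z ^ n).

Definition u_of (kappa phi : R) : R :=
  RInt (fun t => hyp2F1 (1/4) (3/4) (1/2) (kappa ^ 2 * (sin t) ^ 2)) 0 phi.

Definition g2 (kappa : R) : R := 4/3 - kappa ^ 2.
Definition g3 (kappa : R) : R := 8/27 - kappa ^ 2 / 3.

(* By the binomial series, F(1/4, 3/4; 1/2; s^2) = ((1+s)^(-1/2) + (1-s)^(-1/2)) / 2,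
   so u'(phi) = ((1 + kappa sin phi)^(-1/2) + (1 - kappa sin phi)^(-1/2)) / 2.
   With y = (wp + 1/3)^(-1/2) and sin phi = y sqrt (1 - kappa^2 y^2 / 4) this
   becomes u = U(y) := int dy / sqrt (1 - y^2 + kappa^2 y^4 / 4), while the
   Weierstrass equation becomes y'^2 = 1 - y^2 + kappa^2 y^4 / 4.  Hence
   U(y(u)) has derivative +-1; by Darboux the sign is constant, and since
   U(y(u)) > 0 tends to 0 as u -> 0+, U(y(u)) = u: phi(u) is the substituted
   angle (for u < 0 by oddness).  Finally
   cos^2 psi = 1 - kappa^2 sin^2 phi = (1 - kappa^2 y^2 / 2)^2, and cos psi > 0
   near 0 selects the root 1 - kappa^2 / (2 (wp + 1/3)). *)

From Stdlib Require Import Reals Factorial Lra Lia Psatz.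
From Coquelicot Require Import Coquelicot.
Open Scope R_scope.

Lemma locally_0_iff (Q : R -> Prop) :
  locally 0 Q <-> exists d, 0 < d /\ forall u, Rabs u < d -> Q u.
Proof.
  split.
  - intros [[d Hd] HQ]. exists d; split; [exact Hd|].
    intros u Hu; apply HQ. change (Rabs (u - 0) < d). now rewrite Rminus_0_r.
  - intros (d & Hd & HQ). exists (mkposreal d Hd); intros u Hu. apply HQ.
    change (Rabs (u - 0) < d) in Hu. now rewrite Rminus_0_r in Hu.
Qed.

Lemma locally'_0_iff (Q : R -> Prop) :
  locally' 0 Q <-> exists d, 0 < d /\ forall u, 0 < Rabs u < d -> Q u.
Proof.
  unfold locally', within. rewrite locally_0_iff.
  split; intros (d & Hd & HQ); exists d; split; auto; intros u Hu.
  - apply HQ; [lra|]. intros ->. rewrite Rabs_R0 in Hu; lra.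
  - intros Hu0. apply HQ. split; [now apply Rabs_pos_lt|exact Hu].
Qed.

Lemma at_right_0_iff (Q : R -> Prop) :
  at_right 0 Q <-> exists d, 0 < d /\ forall u, 0 < u < d -> Q u.
Proof.
  unfold at_right, within. rewrite locally_0_iff.
  split; intros (d & Hd & HQ); exists d; split; auto; intros u Hu.
  - apply HQ; [rewrite Rabs_pos_eq|]; lra.
  - intros Hu0. apply HQ. apply Rabs_def2 in Hu; lra.
Qed.

Lemma at_left_0_iff (Q : R -> Prop) :
  at_left 0 Q <-> exists d, 0 < d /\ forall u, - d < u < 0 -> Q u.
Proof.
  unfold at_left, within. rewrite locally_0_iff.
  split; intros (d & Hd & HQ); exists d; split; auto; intros u Hu.
  - apply HQ; [rewrite Rabs_left|]; lra.
  - intros Hu0. apply HQ. apply Rabs_def2 in Hu; lra.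
Qed.

Lemma at_left_0_opp (Q : R -> Prop) :
  at_right 0 (fun u => Q (- u)) -> at_left 0 Q.
Proof.
  rewrite at_right_0_iff, at_left_0_iff. intros (d & Hd & HQ).
  exists d; split; [exact Hd|]. intros u Hu.
  rewrite <- (Ropp_involutive u). apply HQ. lra.
Qed.

Lemma locally'_0_of_sides (Q : R -> Prop) :
  at_left 0 Q -> at_right 0 Q -> locally' 0 Q.
Proof.
  rewrite at_left_0_iff, at_right_0_iff, locally'_0_iff.
  intros (d1 & Hd1 & HL) (d2 & Hd2 & HR). exists (Rmin d1 d2).
  split; [now apply Rmin_glb_lt|]. intros u [Hu0 Hu].
  pose proof (Rmin_l d1 d2); pose proof (Rmin_r d1 d2).
  destruct (Rlt_or_le u 0).
  - rewrite Rabs_left in Hu by lra. apply HL; lra.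
  - rewrite Rabs_pos_eq in Hu0, Hu by lra. apply HR; lra.
Qed.

Lemma locally_0_opp (Q : R -> Prop) : locally 0 Q -> locally 0 (fun u => Q (- u)).
Proof.
  rewrite !locally_0_iff. intros (d & Hd & HQ). exists d; split; [exact Hd|].
  intros u Hu. apply HQ. now rewrite Rabs_Ropp.
Qed.

Lemma locally'_0_opp (Q : R -> Prop) : locally' 0 Q -> locally' 0 (fun u => Q (- u)).
Proof.
  rewrite !locally'_0_iff. intros (d & Hd & HQ). exists d; split; [exact Hd|].
  intros u Hu. apply HQ. now rewrite Rabs_Ropp.
Qed.

Lemma at_right_le_locally' (x : R) : filter_le (at_right x) (locally' x).
Proof.
  intros Q. unfold locally', at_right, within.
  apply filter_imp. intros t H ?; apply H; lra.
Qed.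

Lemma at_left_le_locally' (x : R) : filter_le (at_left x) (locally' x).
Proof.
  intros Q. unfold locally', at_left, within.
  apply filter_imp. intros t H ?; apply H; lra.
Qed.

Lemma filterlim_p_infty_gt {T : Type} {F : (T -> Prop) -> Prop} {FF : Filter F}
  (f : T -> R) (M : R) :
  filterlim f F (Rbar_locally p_infty) -> F (fun t => M < f t).
Proof. intros Hf. apply Hf. now exists M. Qed.

Lemma is_derive_diff_quot (h : R -> R) (x l eps : R) :
  is_derive h x l -> 0 < eps ->
  locally' x (fun t => Rabs ((h t - h x) / (t - x) - l) < eps).
Proof.
  intros Hd Heps. apply is_derive_Reals in Hd.
  destruct (Hd eps Heps) as [d Hd']. exists d. intros t Ht Htx.
  replace t with (x + (t - x)) at 1 by ring. apply Hd'; [lra|exact Ht].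
Qed.

Lemma is_derive_pos_at_right (h : R -> R) (x l : R) :
  is_derive h x l -> 0 < l -> at_right x (fun t => h x < h t).
Proof.
  intros Hd Hl. generalize (is_derive_diff_quot h x l l Hd Hl).
  unfold locally', at_right, within. apply filter_imp.
  intros t Hq Hxt. apply Rabs_def2 in Hq; [|lra].
  assert (E : h t - h x = (h t - h x) / (t - x) * (t - x)) by (field; lra).
  nra.
Qed.

Lemma is_derive_neg_at_left (h : R -> R) (x l : R) :
  is_derive h x l -> l < 0 -> at_left x (fun t => h x < h t).
Proof.
  intros Hd Hl. generalize (is_derive_diff_quot h x l (- l) Hd ltac:(lra)).
  unfold locally', at_left, within. apply filter_imp.
  intros t Hq Htx. apply Rabs_def2 in Hq; [|lra].
  assert (E : h t - h x = (h t - h x) / (t - x) * (t - x)) by (field; lra).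
  nra.
Qed.

Lemma at_right_interval (m b : R) : m < b -> at_right m (fun t => m < t < b).
Proof.
  intros Hmb. assert (Hd : 0 < b - m) by lra.
  exists (mkposreal _ Hd). intros t Ht Hmt. change (Rabs (t - m) < b - m) in Ht.
  apply Rabs_def2 in Ht. lra.
Qed.

Lemma at_left_interval (a m : R) : a < m -> at_left m (fun t => a < t < m).
Proof.
  intros Ham. assert (Hd : 0 < m - a) by lra.
  exists (mkposreal _ Hd). intros t Ht Htm. change (Rabs (t - m) < m - a) in Ht.
  apply Rabs_def2 in Ht. lra.
Qed.

(* Darboux: the derivative vanishes at a maximum of [h] on [a, b]. *)
Lemma is_derive_sign_change_root (h dh : R -> R) (a b : R) :
  a < b -> (forall x, a <= x <= b -> is_derive h x (dh x)) ->
  0 < dh a -> dh b < 0 -> exists c, a <= c <= b /\ dh c = 0.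
Proof.
  intros Hab Hd Ha Hb.
  destruct (continuity_ab_maj h a b) as [m [Hmax Hm]]; [lra| |].
  { intros c Hc. apply continuity_pt_filterlim.
    apply (ex_derive_continuous (K := R_AbsRing) (V := R_NormedModule)).
    eexists; now apply Hd. }
  exists m; split; [exact Hm|].
  destruct (Rtotal_order (dh m) 0) as [Hneg|[Hz|Hpos]]; [exfalso|exact Hz|exfalso].
  - assert (Ham : a < m) by (destruct (Req_dec m a) as [->|]; lra).
    destruct (filter_ex (F := at_left m) _ (filter_and _ _
      (is_derive_neg_at_left h m _ (Hd m Hm) Hneg) (at_left_interval a m Ham)))
      as [t [Ht Hat]].
    specialize (Hmax t ltac:(lra)). lra.
  - assert (Hmb : m < b) by (destruct (Req_dec m b) as [->|]; lra).
    destruct (filter_ex (F := at_right m) _ (filter_and _ _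
      (is_derive_pos_at_right h m _ (Hd m Hm) Hpos) (at_right_interval m b Hmb)))
      as [t [Ht Htb]].
    specialize (Hmax t ltac:(lra)). lra.
Qed.

Lemma is_derive_unit_sq_const (h dh : R -> R) (a b : R) : a < b ->
  (forall x, a <= x <= b -> is_derive h x (dh x) /\ dh x ^ 2 = 1) -> dh a = dh b.
Proof.
  intros Hab Hd.
  assert (Hpm : forall x, a <= x <= b -> dh x = 1 \/ dh x = -1).
  { intros x Hx. destruct (Hd x Hx) as [_ Hx2].
    assert (E : (dh x - 1) * (dh x + 1) = 0) by (simpl in Hx2; nra).
    apply Rmult_integral in E. lra. }
  assert (Hnz : forall x, a <= x <= b -> dh x <> 0).
  { intros x Hx. destruct (Hpm x Hx); lra. }
  destruct (Hpm a ltac:(lra)), (Hpm b ltac:(lra)); try lra; exfalso.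
  - destruct (is_derive_sign_change_root h dh a b) as (c & Hc & Hc0); try lra.
    + intros x Hx; apply Hd, Hx.
    + exact (Hnz c Hc Hc0).
  - destruct (is_derive_sign_change_root (fun x => - h x) (fun x => - dh x) a b)
      as (c & Hc & Hc0); try lra.
    + intros x Hx. apply (is_derive_opp h x (dh x)), Hd, Hx.
    + apply (Hnz c Hc). lra.
Qed.

Lemma is_derive_0_const (g : R -> R) (a b : R) :
  (forall x, a < x < b -> is_derive g x 0) ->
  forall u v, a < u < b -> a < v < b -> g u = g v.
Proof.
  intros Hd u v Hu Hv.
  destruct (Rtotal_order u v) as [H|[->|H]]; [|reflexivity|symmetry];
    apply eq_is_derive; try lra; intros t Ht; apply Hd; lra.
Qed.

Lemma unit_derive_at_right_eq_id (h dh : R -> R) (eta : R) : 0 < eta ->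
  (forall u, 0 < u < eta -> is_derive h u (dh u) /\ dh u ^ 2 = 1) ->
  filterlim h (at_right 0) (locally 0) ->
  (forall u, 0 < u < eta -> 0 < h u) ->
  forall u, 0 < u < eta -> h u = u.
Proof.
  intros Heta Hd Hlim Hpos.
  set (m := eta / 2). assert (Hm : 0 < m < eta) by (unfold m; lra).
  set (e := dh m).
  assert (He : forall x, 0 < x < eta -> dh x = e).
  { intros x Hx. destruct (Rtotal_order x m) as [H|[->|H]]; [|reflexivity|symmetry];
      apply is_derive_unit_sq_const with h; try lra; intros t Ht; apply Hd; lra. }
  set (c := h m - e * m).
  assert (Hc : forall u, 0 < u < eta -> h u = e * u + c).
  { intros u Hu. enough (h u - e * u = h m - e * m) by (unfold c; lra).
    apply (is_derive_0_const (fun u => h u - e * u) 0 eta); auto.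
    intros x Hx. replace 0 with (dh x - e * 1) by (rewrite He; auto; ring).
    apply (is_derive_minus (K := R_AbsRing) (V := R_NormedModule)); [apply Hd, Hx|].
    auto_derive; auto; ring. }
  clearbody c.
  assert (Hc0 : c = 0).
  { apply (filterlim_locally_unique (F := at_right 0)
      (FF := Proper_StrongProper _ (at_right_proper_filter 0)) (fun u => e * u + c)).
    - apply (filterlim_filter_le_1 (F := locally 0)); [apply filter_le_within|].
      assert (Hcont : continuous (fun u => e * u + c) 0).
      { apply (ex_derive_continuous (K := R_AbsRing) (V := R_NormedModule)).
        auto_derive; auto. }
      unfold continuous in Hcont. cbv beta in Hcont.
      now rewrite Rmult_0_r, Rplus_0_l in Hcont.
    - apply filterlim_ext_loc with h; [|exact Hlim].
      apply at_right_0_iff. exists eta; split; auto. }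
  assert (He1 : e = 1).
  { specialize (Hpos m Hm). rewrite Hc, Hc0 in Hpos by exact Hm.
    destruct (Hd m Hm) as [_ He2]. fold e in He2. simpl in He2. nra. }
  intros u Hu. rewrite Hc, Hc0, He1 by exact Hu. ring.
Qed.

Lemma poch_pos (a : R) (n : nat) : 0 < a -> 0 < poch a n.
Proof.
  intros Ha; induction n as [|n IH]; simpl; [lra|].
  pose proof (pos_INR n); nra.
Qed.

Lemma INR_fact_pos (n : nat) : 0 < INR (fact n).
Proof. apply lt_0_INR, lt_O_fact. Qed.

Lemma CV_radius_ge_1_of_bounded (a : nat -> R) :
  (forall n, Rabs (a n) <= 1) -> Rbar_le 1 (CV_radius a).
Proof.
  intros Ha. apply (proj1 (CV_radius_bounded a)).
  exists 1; intros n. rewrite pow1, Rmult_1_r. apply Ha.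
Qed.

Lemma Rabs_lt_CV_radius (a : nat -> R) (x : R) :
  (forall n, Rabs (a n) <= 1) -> Rabs x < 1 -> Rbar_lt (Rabs x) (CV_radius a).
Proof.
  intros Ha Hx. apply Rbar_lt_le_trans with 1; [exact Hx|].
  now apply CV_radius_ge_1_of_bounded.
Qed.

(* Taylor coefficients of (1 - x)^(-1/2). *)
Definition invsqrt_coef (m : nat) : R := poch (1/2) m / INR (fact m).

Lemma invsqrt_coef_S (m : nat) :
  invsqrt_coef (S m) = invsqrt_coef m * ((INR m + 1/2) / (INR m + 1)).
Proof.
  unfold invsqrt_coef; simpl poch. rewrite fact_simpl, mult_INR, S_INR.
  pose proof (pos_INR m); pose proof (INR_fact_pos m). field. lra.
Qed.

Lemma invsqrt_coef_bound (m : nat) : 0 < invsqrt_coef m <= 1.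
Proof.
  induction m as [|m IH].
  - unfold invsqrt_coef; simpl; lra.
  - rewrite invsqrt_coef_S. pose proof (pos_INR m).
    assert (0 < (INR m + 1/2) / (INR m + 1) <= 1).
    { split; [apply Rdiv_lt_0_compat; lra|].
      apply Rmult_le_reg_r with (INR m + 1); [lra|].
      field_simplify; lra. }
    split; nra.
Qed.

Lemma Rabs_invsqrt_coef_le_1 (m : nat) : Rabs (invsqrt_coef m) <= 1.
Proof.
  pose proof (invsqrt_coef_bound m). rewrite Rabs_pos_eq; lra.
Qed.

Lemma PSeries_invsqrt_coef_ode (x : R) : Rabs x < 1 ->
  2 * (1 - x) * PSeries (PS_derive invsqrt_coef) x = PSeries invsqrt_coef x.
Proof.
  intros Hx.
  assert (Hcv : forall a : nat -> R, (forall n, Rabs (a n) <= 1) ->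
      Rbar_lt (Rabs x) (CV_radius a)) by (intros; now apply Rabs_lt_CV_radius).
  assert (Hshift : PSeries (fun n => INR n * invsqrt_coef n) x
                   = x * PSeries (PS_derive invsqrt_coef) x).
  { rewrite PSeries_decr_1_aux; [reflexivity | simpl; ring]. }
  assert (Hrec : PSeries (fun n => INR n * invsqrt_coef n) x
      = PSeries (PS_derive invsqrt_coef) x + (-1/2) * PSeries invsqrt_coef x).
  { rewrite <- PSeries_scal, <- PSeries_plus.
    - apply PSeries_ext; intros n. unfold PS_plus, PS_scal, PS_derive.
      change (plus ?a ?b) with (a + b); change (scal ?a ?b) with (a * b).
      rewrite invsqrt_coef_S, S_INR. pose proof (pos_INR n). field. lra.
    - apply ex_pseries_derive, Hcv, Rabs_invsqrt_coef_le_1.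
    - apply ex_pseries_scal; [apply Rmult_comm|].
      apply CV_radius_inside, Hcv, Rabs_invsqrt_coef_le_1. }
  lra.
Qed.

Lemma PSeries_invsqrt_coef (x : R) : Rabs x < 1 ->
  PSeries invsqrt_coef x = / sqrt (1 - x).
Proof.
  intros Hx.
  set (g := fun t => PSeries invsqrt_coef t * sqrt (1 - t)).
  assert (Hg' : forall t, Rabs t < 1 -> is_derive g t 0).
  { intros t Ht. apply Rabs_def2 in Ht.
    assert (Hs : 0 < sqrt (1 - t)) by (apply sqrt_lt_R0; lra).
    assert (Hf : is_derive (PSeries invsqrt_coef) t (PSeries (PS_derive invsqrt_coef) t)).
    { apply is_derive_PSeries, Rabs_lt_CV_radius;
        [apply Rabs_invsqrt_coef_le_1 | apply Rabs_def1; lra]. }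
    assert (Hr : is_derive (fun t => sqrt (1 - t)) t (- / (2 * sqrt (1 - t)))).
    { auto_derive; [lra | unfold Rminus; ring]. }
    replace 0 with (PSeries (PS_derive invsqrt_coef) t * sqrt (1 - t)
                    + PSeries invsqrt_coef t * (- / (2 * sqrt (1 - t)))).
    - apply (is_derive_mult _ _ _ _ _ Hf Hr). intros; apply Rmult_comm.
    - rewrite <- (PSeries_invsqrt_coef_ode t) by (apply Rabs_def1; lra).
      rewrite <- (sqrt_sqrt (1 - t)) at 2 by lra. field. lra. }
  assert (Hg0 : g 0 = 1).
  { unfold g. rewrite PSeries_0, Rminus_0_r, sqrt_1. unfold invsqrt_coef; simpl; field. }
  assert (Hgx : g x = 1).
  { rewrite <- Hg0. apply Rabs_def2 in Hx.
    destruct (Rtotal_order x 0) as [H|[->|H]]; [|reflexivity|symmetry];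
      apply eq_is_derive; try lra; intros t Ht; apply Hg', Rabs_def1; lra. }
  assert (Hs : 0 < sqrt (1 - x)) by (apply sqrt_lt_R0; apply Rabs_def2 in Hx; lra).
  unfold g in Hgx. apply (Rmult_eq_reg_r (sqrt (1 - x))); [|lra].
  rewrite Hgx, Rinv_l; lra.
Qed.

(* Duplication formulas: (1/2)_(2n) = 4^n (1/4)_n (3/4)_n and (2n)! = 4^n n! (1/2)_n. *)
Lemma hyp2F1_coef_quarter (n : nat) :
  poch (1/4) n * poch (3/4) n / (poch (1/2) n * INR (fact n)) = invsqrt_coef (2 * n).
Proof.
  induction n as [|n IH].
  - unfold invsqrt_coef; simpl; field.
  - replace (2 * S n)%nat with (S (S (2 * n))) by lia.
    rewrite !invsqrt_coef_S, <- IH. simpl poch.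
    rewrite fact_simpl, mult_INR, !S_INR, mult_INR.
    pose proof (pos_INR n); pose proof (INR_fact_pos n); pose proof (poch_pos (1/2) n).
    simpl INR. field. repeat split; lra.
Qed.

Lemma hyp2F1_quarter_sq (s : R) : -1 < s < 1 ->
  hyp2F1 (1/4) (3/4) (1/2) (s ^ 2) = (/ sqrt (1 + s) + / sqrt (1 - s)) / 2.
Proof.
  intros Hs.
  assert (Hs2 : Rabs (s ^ 2) < 1) by (rewrite Rabs_pos_eq by apply pow2_ge_0; nra).
  assert (Hsub : forall j, ex_pseries (fun n => invsqrt_coef (2 * n + j)) (s ^ 2)).
  { intros j. apply CV_radius_inside, Rabs_lt_CV_radius; [|exact Hs2].
    intros n; apply Rabs_invsqrt_coef_le_1. }
  assert (Heven : forall t, t ^ 2 = s ^ 2 ->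
      PSeries invsqrt_coef t = PSeries (fun n => invsqrt_coef (2 * n)) (s ^ 2)
        + t * PSeries (fun n => invsqrt_coef (2 * n + 1)) (s ^ 2)).
  { intros t Ht. rewrite <- Ht. apply PSeries_odd_even; rewrite Ht.
    - apply ex_pseries_ext with (fun n => invsqrt_coef (2 * n + 0));
        [intros n; now rewrite Nat.add_0_r | apply Hsub].
    - apply Hsub. }
  assert (Hhyp : hyp2F1 (1/4) (3/4) (1/2) (s ^ 2)
                 = PSeries (fun n => invsqrt_coef (2 * n)) (s ^ 2)).
  { unfold hyp2F1, PSeries. apply Series_ext; intros n.
    now rewrite hyp2F1_coef_quarter. }
  replace (1 + s) with (1 - - s) by ring.
  rewrite Hhyp, <- !PSeries_invsqrt_coef by (apply Rabs_def1; lra).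
  rewrite (Heven s), (Heven (- s)) by ring.
  lra.
Qed.

Definition u_integrand (kappa t : R) : R :=
  (/ sqrt (1 + kappa * sin t) + / sqrt (1 - kappa * sin t)) / 2.

Section UOf.
Variable kappa : R.
Hypothesis Hk : 0 < kappa < 1.

Lemma kappa_sin_bound (t : R) : -1 < kappa * sin t < 1.
Proof. pose proof (SIN_bound t). split; nra. Qed.

Lemma u_integrand_pos (t : R) : 0 < u_integrand kappa t.
Proof.
  pose proof (kappa_sin_bound t). unfold u_integrand.
  assert (0 < / sqrt (1 + kappa * sin t)) by (apply Rinv_0_lt_compat, sqrt_lt_R0; lra).
  assert (0 < / sqrt (1 - kappa * sin t)) by (apply Rinv_0_lt_compat, sqrt_lt_R0; lra).
  lra.
Qed.

Lemma u_integrand_continuous (t : R) : continuous (u_integrand kappa) t.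
Proof.
  apply (ex_derive_continuous (K := R_AbsRing) (V := R_NormedModule)).
  pose proof (kappa_sin_bound t). unfold u_integrand.
  auto_derive. repeat split; try lra; apply Rgt_not_eq, sqrt_lt_R0; lra.
Qed.

Lemma u_integrand_opp (t : R) : u_integrand kappa (- t) = u_integrand kappa t.
Proof.
  unfold u_integrand. rewrite sin_neg.
  replace (1 + kappa * - sin t) with (1 - kappa * sin t) by ring.
  replace (1 - kappa * - sin t) with (1 + kappa * sin t) by ring. lra.
Qed.

Lemma ex_RInt_u_integrand (a b : R) : ex_RInt (u_integrand kappa) a b.
Proof.
  apply (ex_RInt_continuous (V := R_CompleteNormedModule)).
  intros; apply u_integrand_continuous.
Qed.

Lemma u_of_RInt (x : R) : u_of kappa x = RInt (u_integrand kappa) 0 x.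
Proof.
  apply RInt_ext; intros t _.
  replace (kappa ^ 2 * sin t ^ 2) with ((kappa * sin t) ^ 2) by ring.
  apply hyp2F1_quarter_sq, kappa_sin_bound.
Qed.

Lemma is_derive_u_of (x : R) : is_derive (u_of kappa) x (u_integrand kappa x).
Proof.
  apply is_derive_ext with (RInt (u_integrand kappa) 0).
  { intros t; symmetry; apply u_of_RInt. }
  apply is_derive_RInt with 0; [|apply u_integrand_continuous].
  apply filter_forall; intros b. apply RInt_correct, ex_RInt_u_integrand.
Qed.

Lemma u_of_0 : u_of kappa 0 = 0.
Proof. rewrite u_of_RInt. apply (RInt_point (V := R_CompleteNormedModule)). Qed.

Lemma u_of_opp (x : R) : u_of kappa (- x) = - u_of kappa x.
Proof.
  rewrite !u_of_RInt.
  replace 0 with (-1 * 0 + 0) at 1 by ring. replace (- x) with (-1 * x + 0) by ring.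
  rewrite <- RInt_comp_lin by apply ex_RInt_u_integrand.
  rewrite (RInt_ext _ (fun y => opp (u_integrand kappa y))).
  - now rewrite (RInt_opp (V := R_CompleteNormedModule)) by apply ex_RInt_u_integrand.
  - intros y _. change (scal (-1) ?a) with (-1 * a). change (opp ?a) with (- a).
    replace (-1 * y + 0) with (- y) by lra. rewrite u_integrand_opp. lra.
Qed.

Lemma u_of_lt (x y : R) : x < y -> u_of kappa x < u_of kappa y.
Proof.
  intros Hxy. apply (incr_function _ m_infty p_infty (u_integrand kappa)); try easy.
  - intros; apply is_derive_u_of.
  - intros; apply u_integrand_pos.
Qed.

Lemma u_of_inj (x y : R) : u_of kappa x = u_of kappa y -> x = y.
Proof.
  intros E. destruct (Rtotal_order x y) as [H|[H|H]]; [|exact H|];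
    apply u_of_lt in H; lra.
Qed.

End UOf.

Lemma is_derive_asin (x : R) : -1 < x < 1 -> is_derive asin x (/ sqrt (1 - x ^ 2)).
Proof.
  intros Hx. apply is_derive_Reals, derive_pt_eq_1 with (derivable_pt_asin x Hx).
  rewrite derive_pt_asin. unfold Rsqr. rewrite <- Rsqr_pow2. unfold Rsqr, Rdiv. ring.
Qed.

Definition subst_root (kappa y : R) : R := sqrt (1 - kappa ^ 2 * y ^ 2 / 4).
Definition subst_sin (kappa y : R) : R := y * subst_root kappa y.
Definition subst_angle (kappa y : R) : R := asin (subst_sin kappa y).
Definition subst_quartic (kappa y : R) : R := 1 - y ^ 2 + kappa ^ 2 * y ^ 4 / 4.
Definition u_subst (kappa y : R) : R := u_of kappa (subst_angle kappa y).

Section Substitution.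
Variables kappa y : R.
Hypothesis Hk : 0 < kappa < 1.
Hypothesis Hy : -1 < y < 1.

Lemma kappa_y_sq_bound : 0 <= kappa ^ 2 * y ^ 2 < 1.
Proof.
  assert (0 < kappa ^ 2 < 1) by (simpl; nra).
  assert (0 <= y ^ 2 < 1) by (simpl; nra).
  split; [apply Rmult_le_pos|]; nra.
Qed.

Lemma subst_root_sq : subst_root kappa y * subst_root kappa y = 1 - kappa ^ 2 * y ^ 2 / 4.
Proof. apply sqrt_sqrt. pose proof kappa_y_sq_bound. lra. Qed.

Lemma subst_root_pos : 0 < subst_root kappa y.
Proof. apply sqrt_lt_R0. pose proof kappa_y_sq_bound. lra. Qed.

Lemma subst_sin_sq : subst_sin kappa y ^ 2 = y ^ 2 * (1 - kappa ^ 2 * y ^ 2 / 4).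
Proof. unfold subst_sin. rewrite <- subst_root_sq. ring. Qed.

Lemma subst_quartic_pos : 0 < subst_quartic kappa y.
Proof.
  unfold subst_quartic. pose proof kappa_y_sq_bound.
  assert (0 <= y ^ 2 < 1) by (simpl; nra).
  replace (y ^ 4) with (y ^ 2 * y ^ 2) by ring. nra.
Qed.

Lemma one_sub_subst_sin_sq : 1 - subst_sin kappa y ^ 2 = subst_quartic kappa y.
Proof. rewrite subst_sin_sq. unfold subst_quartic. field. Qed.

Lemma subst_sin_bound : -1 < subst_sin kappa y < 1.
Proof.
  pose proof one_sub_subst_sin_sq; pose proof subst_quartic_pos. simpl in *; nra.
Qed.

Lemma is_derive_subst_sin :
  is_derive (subst_sin kappa) y
    ((1 - kappa ^ 2 * y ^ 2 / 2) / subst_root kappa y).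
Proof.
  pose proof subst_root_sq as Hsq; pose proof subst_root_pos as Hpos.
  unfold subst_sin, subst_root in *. auto_derive; [nra|].
  replace (1 + - (kappa * (kappa * 1) * (y * (y * 1)) * / 4))
    with (1 - kappa ^ 2 * y ^ 2 / 4) by (simpl; field).
  set (r := sqrt _) in *.
  apply (Rmult_eq_reg_r r); [|lra].
  field_simplify; [|lra..]. replace (r ^ 2) with (r * r) by ring. rewrite Hsq. field.
Qed.

(* 1 +- kappa sin phi = (r +- kappa y / 2)^2, with r = [subst_root kappa y]. *)
Lemma u_integrand_subst_angle :
  u_integrand kappa (subst_angle kappa y)
  = subst_root kappa y / (1 - kappa ^ 2 * y ^ 2 / 2).
Proof.
  pose proof kappa_y_sq_bound. pose proof subst_sin_bound.
  pose proof subst_root_sq as Hsq; pose proof subst_root_pos as Hpos.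
  unfold u_integrand, subst_angle. rewrite sin_asin by lra.
  unfold subst_sin. set (r := subst_root kappa y) in *.
  assert (Hp : 0 < r + kappa * y / 2 /\ 0 < r - kappa * y / 2).
  { assert (0 < (r + kappa * y / 2) * (r - kappa * y / 2)).
    { replace ((r + kappa * y / 2) * (r - kappa * y / 2))
        with (r * r - kappa ^ 2 * y ^ 2 / 4) by field. lra. }
    nra. }
  replace (1 + kappa * (y * r)) with ((r + kappa * y / 2) ^ 2)
    by (replace 1 with (r * r + kappa ^ 2 * y ^ 2 / 4) by lra; field).
  replace (1 - kappa * (y * r)) with ((r - kappa * y / 2) ^ 2)
    by (replace 1 with (r * r + kappa ^ 2 * y ^ 2 / 4) by lra; field).
  rewrite !sqrt_pow2 by lra.
  field_simplify; [|lra..].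
  replace (r ^ 2) with (r * r) by ring. rewrite Hsq. field. lra.
Qed.

Lemma is_derive_u_subst :
  is_derive (u_subst kappa) y (/ sqrt (subst_quartic kappa y)).
Proof.
  pose proof kappa_y_sq_bound. pose proof subst_quartic_pos.
  assert (Hq : 0 < sqrt (subst_quartic kappa y)) by (apply sqrt_lt_R0; lra).
  pose proof (is_derive_comp _ _ _ _ _
    (is_derive_asin _ subst_sin_bound) is_derive_subst_sin) as Hangle.
  change (scal ?a ?b) with (a * b) in Hangle.
  pose proof (is_derive_comp _ _ _ _ _
    (is_derive_u_of kappa Hk (subst_angle kappa y)) Hangle) as Hu.
  change (scal ?a ?b) with (a * b) in Hu.
  rewrite u_integrand_subst_angle, one_sub_subst_sin_sq in Hu.
  unfold u_subst. evar (d : R). replace (/ sqrt _) with d; [exact Hu|].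
  unfold d. pose proof subst_root_pos. field. repeat split; lra.
Qed.

End Substitution.

Lemma u_subst_0 (kappa : R) : 0 < kappa < 1 -> u_subst kappa 0 = 0.
Proof.
  intros Hk. unfold u_subst, subst_angle, subst_sin.
  rewrite Rmult_0_l, asin_0. now apply u_of_0.
Qed.

Lemma u_subst_pos (kappa y : R) : 0 < kappa < 1 -> 0 < y < 1 -> 0 < u_subst kappa y.
Proof.
  intros Hk Hy. rewrite <- (u_subst_0 kappa Hk).
  apply (incr_function _ (-1) 1 (fun y => / sqrt (subst_quartic kappa y)));
    simpl; try lra.
  - intros t Ht1 Ht2. apply is_derive_u_subst; auto.
  - intros t Ht1 Ht2. apply Rinv_0_lt_compat, sqrt_lt_R0, subst_quartic_pos; auto.
Qed.

Lemma continuous_u_subst_0 (kappa : R) : 0 < kappa < 1 -> continuous (u_subst kappa) 0.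
Proof.
  intros Hk. apply (ex_derive_continuous (K := R_AbsRing) (V := R_NormedModule)).
  eexists. apply is_derive_u_subst; auto; lra.
Qed.

Lemma sin_subst_angle (kappa y : R) : 0 < kappa < 1 -> -1 < y < 1 ->
  sin (subst_angle kappa y) = subst_sin kappa y.
Proof.
  intros Hk Hy. unfold subst_angle. rewrite sin_asin; [reflexivity|].
  pose proof (subst_sin_bound kappa y Hk Hy). lra.
Qed.

Definition weierstrass_cubic (kappa p : R) : R := 4 * p ^ 3 - g2 kappa * p - g3 kappa.

Lemma weierstrass_cubic_shift (kappa p : R) :
  weierstrass_cubic kappa p
  = 4 * (p + 1/3) ^ 3 - 4 * (p + 1/3) ^ 2 + kappa ^ 2 * (p + 1/3).
Proof. unfold weierstrass_cubic, g2, g3. field. Qed.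

Lemma weierstrass_cubic_neg (kappa p : R) : 0 < kappa < 1 -> p <= -1 ->
  weierstrass_cubic kappa p < 0.
Proof.
  intros Hk Hp. rewrite weierstrass_cubic_shift. set (X := p + 1/3).
  assert (X < 0) by (unfold X; lra). assert (0 < kappa ^ 2) by (simpl; nra).
  replace (4 * X ^ 3 - 4 * X ^ 2 + kappa ^ 2 * X)
    with (X * (4 * X * (X - 1) + kappa ^ 2)) by ring.
  apply Rmult_neg_pos; [lra|nra].
Qed.

Lemma is_lim_inv_sq_0 : is_lim (fun u => / u ^ 2) 0 p_infty.
Proof.
  apply (filterlim_comp _ _ _ (fun u => u ^ 2) Rinv _ (at_right 0));
    [|exact filterlim_Rinv_0_right].
  intros Q HQ. apply at_right_0_iff in HQ as (d & Hd & HQ).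
  apply locally'_0_iff. exists (Rmin 1 d); split; [now apply Rmin_glb_lt; lra|].
  intros u [Hu0 Hu]. pose proof (Rmin_l 1 d); pose proof (Rmin_r 1 d).
  apply HQ. rewrite <- (pow2_abs u). simpl; nra.
Qed.

Lemma is_lim_double_pole (f : R -> R) (c : R) : c <> 0 ->
  is_lim (fun u => u ^ 2 * f u) 0 c -> is_lim f 0 (Rbar_mult c p_infty).
Proof.
  intros Hc Hlim.
  apply is_lim_ext_loc with (fun u => u ^ 2 * f u * / u ^ 2).
  - apply locally'_0_iff. exists 1; split; [lra|]. intros u [Hu _].
    assert (u <> 0) by (intros ->; rewrite Rabs_R0 in Hu; lra). field; auto.
  - apply is_lim_mult; [exact Hlim | exact is_lim_inv_sq_0 | exact Hc].
Qed.

(* If [P] tended to -oo, the right-hand side of the ODE would become negative. *)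
Lemma weierstrass_pole_p_infty (kappa c : R) (P : R -> R) : 0 < kappa < 1 ->
  locally' 0 (fun u => ex_derive P u /\ Derive P u ^ 2 = weierstrass_cubic kappa (P u)) ->
  c <> 0 -> is_lim (fun u => u ^ 2 * P u) 0 c -> is_lim P 0 p_infty.
Proof.
  intros Hk Hode Hc Hlim. pose proof (is_lim_double_pole P c Hc Hlim) as HP.
  destruct (Rlt_or_le 0 c) as [Hpos|Hneg].
  - now rewrite (is_Rbar_mult_unique _ _ _
      (is_Rbar_mult_sym _ _ _ (is_Rbar_mult_p_infty_pos c Hpos))) in HP.
  - exfalso.
    rewrite (is_Rbar_mult_unique _ _ _
      (is_Rbar_mult_sym _ _ _ (is_Rbar_mult_p_infty_neg c ltac:(simpl; lra)))) in HP.
    assert (Hlow : locally' 0 (fun u => P u < -1))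
      by exact (HP (fun y => y < -1) (ex_intro _ (-1) (fun y Hy => Hy))).
    destruct (filter_ex (ProperFilter := Rbar_locally'_filter 0) _
      (filter_and _ _ Hode Hlow)) as (u & (_ & Hu) & Hlow_u).
    pose proof (weierstrass_cubic_neg kappa (P u) Hk ltac:(lra)).
    pose proof (pow2_ge_0 (Derive P u)). lra.
Qed.

Lemma inv_sqrt_bound (X : R) : 1 < X -> 0 < / sqrt X < 1.
Proof.
  intros HX. assert (1 < sqrt X) by (rewrite <- sqrt_1; apply sqrt_lt_1; lra).
  split; [apply Rinv_0_lt_compat; lra|].
  rewrite <- Rinv_1. apply Rinv_lt_contravar; lra.
Qed.

Lemma is_derive_inv_sqrt_shift (P : R -> R) (u : R) : ex_derive P u -> 0 < P u + 1/3 ->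
  is_derive (fun u => / sqrt (P u + 1/3)) u
    (- Derive P u / (2 * (P u + 1/3) * sqrt (P u + 1/3))).
Proof.
  intros HP HX. assert (0 < sqrt (P u + 1/3)) by (apply sqrt_lt_R0; lra).
  auto_derive.
  - repeat split; auto; lra.
  - change (Derive (fun x => P x) u) with (Derive P u).
    rewrite sqrt_sqrt by lra. field. lra.
Qed.

Lemma weierstrass_subst_quartic (kappa p D : R) :
  D ^ 2 = weierstrass_cubic kappa p -> 0 < p + 1/3 ->
  (- D / (2 * (p + 1/3) * sqrt (p + 1/3))) ^ 2 = subst_quartic kappa (/ sqrt (p + 1/3)).
Proof.
  intros HD HX. rewrite weierstrass_cubic_shift in HD.
  assert (Hs : 0 < sqrt (p + 1/3)) by (apply sqrt_lt_R0; lra).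
  pose proof (sqrt_sqrt (p + 1/3) ltac:(lra)) as Hss.
  unfold subst_quartic. set (X := p + 1/3) in *. set (s := sqrt X) in *.
  replace ((- D / (2 * X * s)) ^ 2) with (D ^ 2 / (4 * X ^ 2 * (s * s))) by (field; lra).
  replace ((/ s) ^ 2) with (/ (s * s)) by (field; lra).
  replace ((/ s) ^ 4) with (/ ((s * s) * (s * s))) by (field; lra).
  rewrite HD, Hss. field. lra.
Qed.

Lemma inv_sqrt_shift_at_right_0 (P : R -> R) :
  filterlim P (at_right 0) (Rbar_locally p_infty) ->
  filterlim (fun u => / sqrt (P u + 1/3)) (at_right 0) (locally 0).
Proof.
  intros HP.
  apply (filterlim_comp _ _ _ _ Rinv _ (Rbar_locally p_infty));
    [|exact (filterlim_Rbar_inv p_infty ltac:(discriminate))].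
  apply (filterlim_comp _ _ _ _ sqrt _ (Rbar_locally' p_infty));
    [|exact filterlim_sqrt_p].
  apply (filterlim_comp _ _ _ P (fun p => p + 1/3) _ (Rbar_locally p_infty)); [exact HP|].
  intros Q [M HM]. exists (M - 1/3). intros p Hp. apply HM. lra.
Qed.

Lemma phi_eq_subst_angle_at_right (kappa : R) (phi P : R -> R) : 0 < kappa < 1 ->
  at_right 0 (fun u => u_of kappa (phi u) = u) ->
  at_right 0 (fun u => ex_derive P u /\ Derive P u ^ 2 = weierstrass_cubic kappa (P u)) ->
  filterlim P (at_right 0) (Rbar_locally p_infty) ->
  at_right 0 (fun u => phi u = subst_angle kappa (/ sqrt (P u + 1/3))).
Proof.
  intros Hk Hinv Hode Hpole.
  set (y := fun u => / sqrt (P u + 1/3)).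
  set (dy := fun u => - Derive P u / (2 * (P u + 1/3) * sqrt (P u + 1/3))).
  destruct (proj1 (at_right_0_iff _) (filter_and _ _ Hinv
      (filter_and _ _ Hode (filterlim_p_infty_gt P (2/3) Hpole))))
    as (eta & Heta & Hnear).
  assert (Hy : forall u, 0 < u < eta -> 0 < y u < 1).
  { intros u Hu. apply inv_sqrt_bound. destruct (Hnear u Hu) as (_ & _ & H). lra. }
  assert (Hid : forall u, 0 < u < eta -> u_subst kappa (y u) = u).
  { apply (unit_derive_at_right_eq_id (fun u => u_subst kappa (y u))
      (fun u => dy u * / sqrt (subst_quartic kappa (y u)))); auto.
    - intros u Hu. destruct (Hnear u Hu) as (_ & [HPd HPode] & HP).
      pose proof (Hy u Hu). split.
      + apply (is_derive_comp (u_subst kappa) y).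
        * apply is_derive_u_subst; auto; lra.
        * apply is_derive_inv_sqrt_shift; auto; lra.
      + pose proof (subst_quartic_pos kappa (y u) Hk ltac:(lra)).
        rewrite Rpow_mult_distr. unfold dy.
        rewrite (weierstrass_subst_quartic kappa) by (auto; lra). fold (y u).
        rewrite pow_inv, pow2_sqrt by lra. field. lra.
    - apply (filterlim_comp _ _ _ y (u_subst kappa) _ (locally 0));
        [exact (inv_sqrt_shift_at_right_0 P Hpole)|].
      pose proof (continuous_u_subst_0 kappa Hk) as Hc.
      unfold continuous in Hc. now rewrite u_subst_0 in Hc.
    - intros u Hu. apply u_subst_pos; auto. }
  apply at_right_0_iff. exists eta; split; [exact Heta|].
  intros u Hu. apply (u_of_inj kappa Hk). destruct (Hnear u Hu) as (Hinv_u & _).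
  rewrite Hinv_u. symmetry. exact (Hid u Hu).
Qed.

Lemma weierstrass_ode_opp (kappa : R) (P : R -> R) (u : R) :
  ex_derive P (- u) /\ Derive P (- u) ^ 2 = weierstrass_cubic kappa (P (- u)) ->
  ex_derive (fun v => P (- v)) u /\
  Derive (fun v => P (- v)) u ^ 2 = weierstrass_cubic kappa (P (- u)).
Proof.
  intros [HPd HPode].
  assert (Hopp : is_derive (fun v : R => - v) u (-1)) by (auto_derive; auto; ring).
  split.
  - apply (ex_derive_comp P (fun v => - v)); [exact HPd | eexists; exact Hopp].
  - rewrite (Derive_comp P (fun v => - v)) by (auto; eexists; exact Hopp).
    rewrite (is_derive_unique _ _ _ Hopp), <- HPode. ring.
Qed.

Lemma phi_eq_subst_angle_at_left (kappa : R) (phi P : R -> R) : 0 < kappa < 1 ->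
  locally 0 (fun u => u_of kappa (phi u) = u) ->
  locally' 0 (fun u => ex_derive P u /\ Derive P u ^ 2 = weierstrass_cubic kappa (P u)) ->
  is_lim P 0 p_infty ->
  at_left 0 (fun u => - phi u = subst_angle kappa (/ sqrt (P u + 1/3))).
Proof.
  intros Hk Hinv Hode Hinf. apply at_left_0_opp.
  apply (phi_eq_subst_angle_at_right kappa (fun u => - phi (- u)) (fun u => P (- u)) Hk).
  - apply filter_le_within. generalize (locally_0_opp _ Hinv).
    apply filter_imp. intros u Hu. rewrite u_of_opp, Hu by exact Hk. ring.
  - apply at_right_le_locally'. generalize (locally'_0_opp _ Hode).
    apply filter_imp. intros u. apply weierstrass_ode_opp.
  - apply (filterlim_comp _ _ _ Ropp P _ (at_left 0)).
    + rewrite <- Ropp_0 at 2. apply filterlim_Ropp_right.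
    + exact (filterlim_filter_le_1 _ (at_left_le_locally' 0) Hinf).
Qed.

Lemma sin_phi_sq_near_0 (kappa : R) (phi P : R -> R) : 0 < kappa < 1 ->
  locally 0 (fun u => u_of kappa (phi u) = u) ->
  locally' 0 (fun u => ex_derive P u /\ Derive P u ^ 2 = weierstrass_cubic kappa (P u)) ->
  is_lim P 0 p_infty ->
  locally' 0 (fun u => sin (phi u) ^ 2 = subst_sin kappa (/ sqrt (P u + 1/3)) ^ 2).
Proof.
  intros Hk Hinv Hode Hinf.
  pose proof (filterlim_p_infty_gt P (2/3) Hinf) as Hbig.
  assert (Hsin : forall p v, 2/3 < p -> v = subst_angle kappa (/ sqrt (p + 1/3)) ->
      sin v ^ 2 = subst_sin kappa (/ sqrt (p + 1/3)) ^ 2).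
  { intros p v Hp ->. pose proof (inv_sqrt_bound (p + 1/3) ltac:(lra)).
    rewrite sin_subst_angle by (auto; lra). reflexivity. }
  apply locally'_0_of_sides.
  - generalize (filter_and _ _ (at_left_le_locally' 0 _ Hbig)
      (phi_eq_subst_angle_at_left kappa phi P Hk Hinv Hode Hinf)).
    apply filter_imp. intros u [Hp Hu].
    rewrite <- (Hsin _ _ Hp Hu), sin_neg. ring.
  - generalize (filter_and _ _ (at_right_le_locally' 0 _ Hbig)
      (phi_eq_subst_angle_at_right kappa phi P Hk (filter_le_within _ _ Hinv)
         (at_right_le_locally' 0 _ Hode)
         (filterlim_filter_le_1 _ (at_right_le_locally' 0) Hinf))).
    apply filter_imp. intros u [Hp Hu]. exact (Hsin _ _ Hp Hu).
Qed.

Lemma cos_eq_of_sin_subst (kappa X s psi : R) : 0 < kappa < 1 -> 1 < X ->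
  s ^ 2 = subst_sin kappa (/ sqrt X) ^ 2 -> sin psi = kappa * s -> 0 < cos psi ->
  cos psi = 1 - (kappa ^ 2 / 2) / X.
Proof.
  intros Hk HX Hs Hsin Hcos.
  pose proof (inv_sqrt_bound X HX) as Hy.
  rewrite subst_sin_sq in Hs by (auto; lra).
  rewrite pow_inv, pow2_sqrt in Hs by lra.
  assert (Hk2 : 0 < kappa ^ 2 < 1) by (simpl; nra).
  assert (Ht : 0 < 1 - (kappa ^ 2 / 2) / X).
  { assert (/ X < 1) by (rewrite <- Rinv_1; apply Rinv_lt_contravar; lra).
    assert (0 < / X) by (apply Rinv_0_lt_compat; lra).
    unfold Rdiv at 2. nra. }
  assert (Hc2 : cos psi ^ 2 = (1 - (kappa ^ 2 / 2) / X) ^ 2).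
  { replace (cos psi ^ 2) with (1 - sin psi ^ 2)
      by (pose proof (sin2_cos2 psi); unfold Rsqr in *; simpl; lra).
    rewrite Hsin, Rpow_mult_distr, Hs. field. lra. }
  set (t := 1 - (kappa ^ 2 / 2) / X) in *.
  assert (E : (cos psi - t) * (cos psi + t) = 0) by (simpl in Hc2; nra).
  apply Rmult_integral in E. lra.
Qed.

Lemma cos_pos_near_0 (f : R -> R) : continuous f 0 -> f 0 = 0 ->
  locally 0 (fun u => 0 < cos (f u)).
Proof.
  intros Hf Hf0. assert (Hpi : 0 < PI / 2) by (pose proof PI_RGT_0; lra).
  apply (filter_imp (fun u => ball (f 0) (PI / 2) (f u))).
  - intros u Hu. change (Rabs (f u - f 0) < PI / 2) in Hu.
    rewrite Hf0, Rminus_0_r in Hu. apply Rabs_def2 in Hu. apply cos_gt_0; lra.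
  - exact (Hf _ (locally_ball _ (mkposreal _ Hpi))).
Qed.

Theorem theorem4 (kappa : R) (Hk : 0 < kappa < 1)
  (phi psi P : R -> R) (delta eps : R)
  (Hdelta : 0 < delta)
  (* phi is a local inverse of u near 0 with phi(0) = 0 *)
  (Hphi0 : phi 0 = 0)
  (Hinv : forall u, Rabs u < delta -> u_of kappa (phi u) = u)
  (* psi is defined (continuously) near u = 0, psi(0) = 0, sin psi = kappa sin phi *)
  (Hpsi0 : psi 0 = 0)
  (Hpsic : forall u, Rabs u < delta -> continuous psi u)
  (Hsin : forall u, Rabs u < delta -> sin (psi u) = kappa * sin (phi u))
  (* P is the Weierstrass function wp(.; g2, g3) (on a real punctured
     neighbourhood of 0): it satisfies the differential equation and has a
     double pole at 0 *)
  (Heps : 0 < eps)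
  (HP : forall u, 0 < Rabs u < eps ->
          ex_derive P u /\
          (Derive P u) ^ 2 = 4 * (P u) ^ 3 - g2 kappa * P u - g3 kappa)
  (Hpole : exists c : R, c <> 0 /\ is_lim (fun u => u ^ 2 * P u) 0 (Finite c)) :
  exists eta : R, 0 < eta /\
    forall u, 0 < Rabs u < eta ->
      cos (psi u) = 1 - (kappa ^ 2 / 2) / (P u + 1/3).
Proof.
  destruct Hpole as (c & Hc & Hlim).
  assert (Hode : locally' 0 (fun u => ex_derive P u /\
                   Derive P u ^ 2 = weierstrass_cubic kappa (P u)))
    by (apply locally'_0_iff; exists eps; split; [exact Heps | exact HP]).
  assert (Hnear : locally 0 (fun u => u_of kappa (phi u) = u /\
                    sin (psi u) = kappa * sin (phi u)))
    by (apply locally_0_iff; exists delta; auto).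
  assert (Hinf : is_lim P 0 p_infty)
    by exact (weierstrass_pole_p_infty kappa c P Hk Hode Hc Hlim).
  assert (Hbig : locally' 0 (fun u => 1 < P u + 1/3)).
  { apply (filter_imp (fun u => 2/3 < P u)); [intros; lra|].
    exact (filterlim_p_infty_gt P (2/3) Hinf). }
  assert (Hcos : locally 0 (fun u => 0 < cos (psi u)))
    by (apply cos_pos_near_0; [apply Hpsic; rewrite Rabs_R0 | ]; auto).
  apply locally'_0_iff.
  generalize (filter_and _ _ (filter_and _ _ Hbig (sin_phi_sq_near_0 kappa phi P Hk
    (filter_imp _ _ (fun u H => proj1 H) Hnear) Hode Hinf))
    (filter_le_within _ _ (filter_and _ _ Hnear Hcos))).
  apply filter_imp. intros u [[HX Hs] [[_ Hsin_u] Hcos_u]].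
  exact (cos_eq_of_sin_subst kappa _ _ _ Hk HX Hs Hsin_u Hcos_u).
Qed.
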